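(* Let $\mathsf{T}\ge2$ and $\mathsf{M}\ge1$ be integers, and let $\zeta_1(n),\zeta_2(n)$ be strictly positive sequences with $\lim_{n\to\infty}\zeta_1(n)/\zeta_2(n)=\lim_{n\to\infty}\zeta_2(n)=\lim_{n\to\infty}\zeta_2(n)^{\mathsf{T}/(\mathsf{T}-1)}/\zeta_1(n)=0$. For real $A_i,R_i,S_{i,t}$ ($i\in[\mathsf{M}]$, $t\in[\mathsf{T}-1]$) define $$p(x)=\prod_{i=1}^{\mathsf{M}}\Big((A_i+R_i)+\zeta_2(n)\sum_{t=1}^{\mathsf{T}-1}S_{i,t}x^t+\zeta_1(n)R_ix^{\mathsf{T}}\Big)=\sum_{k=0}^{\mathsf{M}\mathsf{T}}c_kx^k,$$ and for $\ell=0,\dots,\mathsf{M}-1$ let $C_\ell=\sum_{\mathcal{S}\subseteq[\mathsf{M}],|\mathcal{S}|=\ell}\big(\prod_{i\in\mathcal{S}}R_i\big)\big(\prod_{l\notin\mathcal{S}}(A_l+R_l)\big)$. Then for each $\ell=0,1,\dots,\mathsf{M}-1$, $$c_{\ell\mathsf{T}}=\zeta_1(n)^\ell C_\ell+o\big(\zeta_1(n)^\ell\big)\quad\text{as }n\to\infty,$$ with $A_i,R_i,S_{i,t}$ held fixed (not depending on $n$).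
   Context: $[\mathsf{M}]=\{1,\dots,\mathsf{M}\}$; empty products equal $1$. The coefficients $c_k$ depend on $n$ through $\zeta_1(n),\zeta_2(n)$. *)

From HB Require Import structures.
From mathcomp Require Import all_boot all_order all_algebra.
From mathcomp Require Import all_classical all_reals all_analysis.
Set Implicit Arguments. Unset Strict Implicit. Unset Printing Implicit Defensive.
Import Order.TTheory GRing.Theory Num.Theory.
Local Open Scope ring_scope.

Definition pprod (K : realType) (M T : nat) (A Rr : 'I_M -> K)
    (S : 'I_M -> nat -> K) (z1 z2 : K) : {poly K} :=
  \prod_(i < M) ((A i + Rr i)%:P
                 + z2 *: (\sum_(1 <= t < T) S i t *: 'X^t)
                 + (z1 * Rr i) *: 'X^T).

Definition Ccoef (K : realType) (M : nat) (A Rr : 'I_M -> K) (l : nat) : K :=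
  \sum_(U : {set 'I_M} | #|U| == l)
     (\prod_(i in U) Rr i) * (\prod_(j in ~: U) (A j + Rr j)).

From HB Require Import structures.
From mathcomp Require Import all_boot all_order all_algebra.
From mathcomp Require Import all_classical all_reals all_analysis.
From mathcomp Require Import zify ring.
Import Order.TTheory GRing.Theory Num.Theory.
Import numFieldNormedType.Exports.
Set Implicit Arguments. Unset Strict Implicit. Unset Printing Implicit Defensive.
Local Open Scope ring_scope.

(* Expanding the product, [c_(lT)] is a sum over exponent choices [d i] in
   [0..T] with total [lT], the term of [d] being a constant times
   [z1^k z2^j], where [k] counts the [i] with [d i = T] and [j] those with
   [0 < d i < T].  The terms with [j = 0] have [k = l] and add up to
   [z1^l C_l].  For the others, [kT + j <= lT <= kT + j(T-1)] gives [k < l]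
   and [(l - k) T/(T-1) <= j], so once [z2 <= 1] the ratio
   [z2^j / z1^(l-k)] is at most [(z2^(T/(T-1)) / z1)^(l-k)], which tends
   to 0. *)

Section ProductExpansion.
Variables (R : comNzRingType) (I : finType).

Lemma prod_scaleXn (c : I -> R) (e : I -> nat) :
  \prod_i (c i *: 'X^(e i)) = (\prod_i c i) *: 'X^(\sum_i e i).
Proof.
under eq_bigr do rewrite -mul_polyC.
by rewrite big_split /= -rmorph_prod prodrXr mul_polyC.
Qed.

Lemma coef_prod_sum_scaleXn (N : nat) (a : I -> nat -> R) (k : nat) :
  (\prod_i \sum_(t < N) a i t *: 'X^t)`_k =
  \sum_(d : {ffun I -> 'I_N} | (\sum_i d i == k)%N) \prod_i a i (d i).
Proof.
rewrite bigA_distr_bigA /=.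
under eq_bigr do rewrite prod_scaleXn.
by rewrite coef_sumMXn.
Qed.

End ProductExpansion.

Section LevelCounts.
Variables (I : finType) (T : nat).
Implicit Types d : I -> 'I_T.+1.

Definition top_count d := (\sum_i (d i == T :> nat))%N.
Definition mid_count d := (\sum_i (0 < d i < T))%N.

Lemma sum_level_bounds d :
  (top_count d * T + mid_count d <= \sum_i (d i : nat)
     <= top_count d * T + mid_count d * T.-1)%N.
Proof.
rewrite /top_count /mid_count !big_distrl -!big_split /=.
apply/andP; split; apply: leq_sum => i _; have := ltn_ord (d i);
  by case: (d i : nat) => [|t]; rewrite ?ltnS; case: ltngtP => //= *; nia.
Qed.

Lemma off_corner_level_bounds d l :
  (\sum_i (d i : nat) = l * T)%N -> (0 < mid_count d)%N ->
  (top_count d < l)%N /\ ((l - top_count d) * T <= mid_count d * T.-1)%N.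
Proof.
move=> deg mid_gt0; have := sum_level_bounds d; rewrite deg mulnBl.
set k := top_count d; set j := mid_count d => /andP[lo hi].
have k_lt_l : (k < l)%N.
  rewrite ltnNge; apply/negP => l_le_k.
  by have := leq_mul l_le_k (leqnn T); nia.
by split => //; nia.
Qed.

End LevelCounts.

Section PolynomialProduct.
Variables (K : realType) (M T : nat) (A Rr : 'I_M -> K) (S : 'I_M -> nat -> K).
Hypothesis T_gt0 : (0 < T)%N.

Definition base_coef (i : 'I_M) (t : nat) : K :=
  if t == 0%N then A i + Rr i else if t == T then Rr i else S i t.

Definition factor_coef (z1 z2 : K) (i : 'I_M) (t : nat) : K :=
  base_coef i t * z1 ^+ (t == T) * z2 ^+ (0 < t < T).

Lemma pprod_factorE (z1 z2 : K) (i : 'I_M) :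
  (A i + Rr i)%:P + z2 *: (\sum_(1 <= t < T) S i t *: 'X^t) + (z1 * Rr i) *: 'X^T
  = \sum_(t < T.+1) factor_coef z1 z2 i t *: 'X^t.
Proof.
apply/polyP => k.
rewrite coef_sumMXn big_ord1_eq !coefD coefC !coefZ coef_sumMXn coefXn.
rewrite big_nat1_cond_eq /factor_coef /base_coef andbT.
case: k => [|k].
  by rewrite /= (ltn_eqF T_gt0) /=; ring.
case: (ltngtP k.+1 T) => [k_lt_T|T_lt_k|<-] /=.
- by rewrite ltnS ltnW // expr0 expr1; ring.
- by rewrite ltnS leqNgt T_lt_k; ring.
- by rewrite ltnSn expr0 expr1; ring.
Qed.

Lemma coef_pprod (z1 z2 : K) (k : nat) :
  (pprod T A Rr S z1 z2)`_k =
  \sum_(d : {ffun 'I_M -> 'I_T.+1} | (\sum_i d i == k)%N)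
     \prod_i factor_coef z1 z2 i (d i).
Proof.
rewrite /pprod; under eq_bigr do rewrite pprod_factorE.
exact: coef_prod_sum_scaleXn.
Qed.

Lemma prod_factor_coef (z1 z2 : K) (d : 'I_M -> 'I_T.+1) :
  \prod_i factor_coef z1 z2 i (d i) =
  \prod_i base_coef i (d i) * z1 ^+ top_count d * z2 ^+ mid_count d.
Proof. by rewrite -!prodrXr -!big_split. Qed.

Definition corner (U : {set 'I_M}) : {ffun 'I_M -> 'I_T.+1} :=
  [ffun i => if i \in U then ord_max else ord0].

Lemma corner_val (U : {set 'I_M}) (i : 'I_M) :
  corner U i = ((i \in U) * T)%N :> nat.
Proof. by rewrite ffunE; case: (i \in U); rewrite /= ?mul1n. Qed.

Lemma sum_corner (U : {set 'I_M}) : (\sum_i corner U i)%N = (#|U| * T)%N.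
Proof.
under eq_bigr do rewrite corner_val.
rewrite -big_distrl -sum1_card; congr (_ * _)%N.
by rewrite [RHS]big_mkcond; apply: eq_bigr => i _; case: (i \in U).
Qed.

Lemma top_count_corner (U : {set 'I_M}) : top_count (corner U) = #|U|.
Proof.
rewrite /top_count -sum1_card [RHS]big_mkcond; apply: eq_bigr => i _.
by rewrite corner_val; case: (i \in U); rewrite ?mul1n ?eqxx // eq_sym (gtn_eqF T_gt0).
Qed.

Lemma mid_count_corner (U : {set 'I_M}) : mid_count (corner U) = 0%N.
Proof.
rewrite /mid_count big1 // => i _; rewrite corner_val.
by case: (i \in U); rewrite /= ?mul1n ?ltnn ?andbF.
Qed.

Lemma prod_base_coef_corner (U : {set 'I_M}) :
  \prod_i base_coef i (corner U i) =
  \prod_(i in U) Rr i * \prod_(j in ~: U) (A j + Rr j).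
Proof.
rewrite (bigID (mem U)) /=; congr (_ * _); apply: eq_big => i; rewrite ?inE //.
- by move=> iU; rewrite corner_val iU mul1n /base_coef eqxx (gtn_eqF T_gt0).
- by move=> /negbTE iNU; rewrite corner_val iNU.
Qed.

Lemma corner_topK (U : {set 'I_M}) : [set i | corner U i == T :> nat] = U.
Proof.
apply/setP => i; rewrite inE corner_val.
by case: (i \in U); rewrite /= ?mul1n ?eqxx // eq_sym (gtn_eqF T_gt0).
Qed.

Lemma cornerK (d : {ffun 'I_M -> 'I_T.+1}) :
  mid_count d = 0%N -> corner [set i | d i == T :> nat] = d.
Proof.
move=> /eqP; rewrite sum_nat_eq0 => /forallP d_end; apply/ffunP => i.
apply/val_inj; rewrite /= corner_val inE.
have := d_end i; have := ltn_ord (d i); rewrite ltnS.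
case: (ltngtP (d i) T) => [|//|->]; last by rewrite mul1n.
by case: (d i : nat).
Qed.

Lemma sum_corner_terms (z1 z2 : K) (l : nat) :
  \sum_(d : {ffun 'I_M -> 'I_T.+1} | (\sum_i d i == l * T)%N && (mid_count d == 0%N))
     \prod_i factor_coef z1 z2 i (d i) = z1 ^+ l * Ccoef A Rr l.
Proof.
rewrite (reindex_onto corner (fun d => [set i | d i == T :> nat])) /=; last first.
  by move=> d /andP[_ /eqP/cornerK].
rewrite /Ccoef big_distrr /=; apply: eq_big => U.
  by rewrite corner_topK sum_corner eqn_pmul2r // mid_count_corner !eqxx !andbT.
move=> /andP[/andP[/eqP]]; rewrite sum_corner => /eqP.
rewrite eqn_pmul2r // => /eqP <- _ _.
rewrite prod_factor_coef top_count_corner mid_count_corner prod_base_coef_corner.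
by rewrite expr0 mulr1 mulrC.
Qed.

Lemma pprod_coef_sub_corner (z1 z2 : K) (l : nat) :
  (pprod T A Rr S z1 z2)`_(l * T) - z1 ^+ l * Ccoef A Rr l =
  \sum_(d : {ffun 'I_M -> 'I_T.+1} | (\sum_i d i == l * T)%N && (0 < mid_count d)%N)
     \prod_i factor_coef z1 z2 i (d i).
Proof.
rewrite coef_pprod (bigID (fun d : {ffun 'I_M -> 'I_T.+1} => mid_count d == 0%N)) /=.
rewrite sum_corner_terms addrC addrK.
by apply: eq_bigl => d; rewrite lt0n.
Qed.

End PolynomialProduct.

Local Open Scope classical_set_scope.

Lemma cvg_pow_ratio0 (R : realType) (u v : nat -> R) (r : R) (p j : nat) :
  (forall n, 0 < u n) -> (forall n, 0 < v n) -> (\forall n \near \oo, v n <= 1) ->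
  (fun n => powR (v n) r / u n) @ \oo --> 0 ->
  (0 < p)%N -> p%:R * r <= j%:R ->
  (fun n => v n ^+ j / u n ^+ p) @ \oo --> 0.
Proof.
move=> u_gt0 v_gt0 v_le1 ratio0 p_gt0 pr_le_j.
apply: (@squeeze_cvgr _ _ eventually_filter _ (cst 0) (fun n => powR (v n) r / u n));
  last 2 first; [exact: cvg_cst|exact: ratio0|].
near=> n.
have [un_gt0 vn_gt0] := (u_gt0 n, v_gt0 n).
rewrite divr_ge0 ?exprn_ge0 ?(ltW vn_gt0) ?(ltW un_gt0) //=.
apply: (@le_trans _ _ ((powR (v n) r / u n) ^+ p)); last first.
  apply: ler_iXnr => //; first by rewrite divr_ge0 ?powR_ge0 ?(ltW un_gt0).
  by apply/ltW; near: n; exact: cvgr_lt ratio0 1 ltr01.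
rewrite expr_div_n ler_pM2r ?invr_gt0 ?exprn_gt0 //.
rewrite -!powR_mulrn ?powR_ge0 ?(ltW vn_gt0) // -powRrM.
apply: ger_powR; last by rewrite mulrC.
by rewrite vn_gt0 /=; near: n.
Unshelve. all: by end_near.
Qed.

Section Asymptotics.
Variables (K : realType) (M T : nat) (A Rr : 'I_M -> K) (S : 'I_M -> nat -> K).
Variables (z1 z2 : nat -> K).
Hypotheses (T_gt1 : (1 < T)%N) (z1_gt0 : forall n, 0 < z1 n) (z2_gt0 : forall n, 0 < z2 n).
Hypothesis z2_le1 : \forall n \near \oo, z2 n <= 1.
Hypothesis z2_z1_ratio0 : (fun n => powR (z2 n) (T%:R / (T.-1)%:R) / z1 n) @ \oo --> 0.

Lemma off_corner_term_cvg0 (l : nat) (d : 'I_M -> 'I_T.+1) :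
  (\sum_i (d i : nat) = l * T)%N -> (0 < mid_count d)%N ->
  (fun n => \prod_i factor_coef T A Rr S (z1 n) (z2 n) i (d i) / z1 n ^+ l) @ \oo --> 0.
Proof.
move=> deg mid_gt0; have [top_lt deg_bound] := off_corner_level_bounds deg mid_gt0.
set k := top_count d in top_lt deg_bound; set j := mid_count d in deg_bound.
have -> : (fun n => \prod_i factor_coef T A Rr S (z1 n) (z2 n) i (d i) / z1 n ^+ l) =
    (fun n => \prod_i base_coef T A Rr S i (d i) * (z2 n ^+ j / z1 n ^+ (l - k))).
  apply: funext => n.
  rewrite prod_factor_coef -/k -/j -(subnKC (ltnW top_lt)) addKn exprD.
  by field; rewrite !expf_neq0 // gt_eqF.
rewrite -(mulr0 (\prod_i base_coef T A Rr S i (d i))).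
apply: (@cvgMl_tmp _ _ _ eventually_filter).
apply: cvg_pow_ratio0 z1_gt0 z2_gt0 z2_le1 z2_z1_ratio0 _ _; first by rewrite subn_gt0.
by rewrite mulrA ler_pdivrMr ?ltr0n -?subn1 ?subn_gt0 // -!natrM ler_nat subn1.
Qed.

End Asymptotics.

Theorem lemma8 (K : realType) (T M : nat) (hT : (2 <= T)%N) (hM : (1 <= M)%N)
    (z1 z2 : nat -> K) (hz1 : forall n, 0 < z1 n) (hz2 : forall n, 0 < z2 n)
    (lim1 : (fun n => z1 n / z2 n) @ \oo --> 0%R)
    (lim2 : z2 @ \oo --> 0%R)
    (lim3 : (fun n => powR (z2 n) (T%:R / (T.-1)%:R) / z1 n) @ \oo --> 0%R)
    (A Rr : 'I_M -> K) (S : 'I_M -> nat -> K) (l : nat) (hl : (l < M)%N) :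
  (fun n => ((pprod T A Rr S (z1 n) (z2 n))`_(l * T) - z1 n ^+ l * Ccoef A Rr l)
            / z1 n ^+ l) @ \oo --> 0%R.
Proof.
have z2_le1 : \forall n \near \oo, z2 n <= 1.
  by apply: filterS (cvgr_lt _ lim2 1 ltr01) => n /ltW.
rewrite -[X in _ --> X](@big1_eq K 0 +%R _ (index_enum _)
  (fun d : {ffun 'I_M -> 'I_T.+1} => (\sum_i d i == l * T)%N && (0 < mid_count d)%N)).
under eq_cvg do rewrite pprod_coef_sub_corner ?(ltnW hT) // mulr_suml.
apply: (cvg_big _ eventually_filter) => [|d /andP[/eqP deg mid_gt0]].
  exact: add_continuous.
exact (off_corner_term_cvg0 A Rr S hT hz1 hz2 z2_le1 lim3 deg mid_gt0).
Qed.
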